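(* Let $X=(v_j)_{j=1}^n$ be a sequence of unit vectors in $\mathbb{C}^d$ whose angles have real parts taking at most $s$ possible values (this includes designs with $2s$ angles, none of which is real). Then $$n=|X|\le\sum_{p+q\le s}\dim H(p,q)=\binom{s+2d-1}{2d-1}+\binom{s+2d-2}{2d-1}.$$
   Context: $\langle z,w\rangle=\sum_iz_i\overline{w_i}$. The angles of $X$ are the inner products $\langle v_j,v_k\rangle$ with $v_j\ne v_k$ (complex numbers $z$ with $|z|\le1$, $z\ne1$). $H(p,q)$ is the space of harmonic polynomials on $\mathbb{C}^d=\mathbb{R}^{2d}$ homogeneous of degree $p$ in $z_1,\ldots,z_d$ and of degree $q$ in $\overline{z_1},\ldots,\overline{z_d}$. *)

From mathcomp Require Import all_boot all_order all_algebra.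
From mathcomp Require Import complex.
From mathcomp Require Import reals.
Set Implicit Arguments. Unset Strict Implicit. Unset Printing Implicit Defensive.
Import Order.TTheory GRing.Theory Num.Theory.
Local Open Scope ring_scope.

Definition cinner (R : realType) (d : nat) (z w : 'I_d -> R[i]) : R[i] :=
  \sum_(i < d) z i * conjc (w i).

Definition unit_vec (R : realType) (d : nat) (v : 'I_d -> R[i]) : Prop :=
  cinner v v = 1.

Definition angles_real_parts_at_most (R : realType) (d n s : nat)
  (X : 'I_n -> ('I_d -> R[i])) : Prop :=
  exists A : seq R, (size A <= s)%N /\
    forall j k : 'I_n, X j <> X k -> complex.Re (cinner (X j) (X k)) \in A.

(* Polynomial method (Delsarte-Goethals-Seidel).  Identify C^d with R^2d, so
   that Re <z, w> is the real dot product and the vectors become points of the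
   unit sphere S^(2d-1) whose mutual dot products take at most s values a != 1.
   The functions f_j x = prod_a (x . v_j - a) vanish at every v_k with k != j
   but not at v_j, hence are linearly independent.  On the sphere |x|^2 = 1,
   so each f_j agrees with a sum of homogeneous polynomials of degrees s and
   s - 1; these span a space of dimension at most
   C(s + 2d - 1, 2d - 1) + C(s + 2d - 2, 2d - 1). *)
From mathcomp Require Import all_boot all_order all_algebra.
From mathcomp Require Import complex reals.
From mathcomp Require Import ring.
Set Implicit Arguments. Unset Strict Implicit. Unset Printing Implicit Defensive.
Import Order.TTheory GRing.Theory Num.Theory.
Local Open Scope ring_scope.

Section SortedTuples.
Variable M : nat.

Definition sorted_tuple k := {t : k.-tuple 'I_M | sorted leq (map val t)}.

Let ord_leq := fun i j : 'I_M => (i <= j)%N.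

Lemma sort_tuple_sorted k (t : k.-tuple 'I_M) :
  sorted leq (map val (sort_tuple ord_leq t)).
Proof. by rewrite sorted_map; apply: sort_sorted => i j; apply: leq_total. Qed.

Definition sort_ord_tuple k (t : k.-tuple 'I_M) : sorted_tuple k :=
  exist (fun u : k.-tuple 'I_M => sorted leq (map val u)) _ (sort_tuple_sorted t).

End SortedTuples.

Lemma card_sorted_tuple N k : #|{: sorted_tuple N.+1 k}| = 'C(k + N, k).
Proof. by rewrite card_sig -card_sorted_tuples cardsE. Qed.

Section PolynomialsOnSphere.
Variables (R : comNzRingType) (M : nat).
Implicit Types (x q : 'I_M -> R) (f g h : ('I_M -> R) -> R).

Definition dot x y := \sum_i x i * y i.

Definition on_sphere x := dot x x = 1.

Definition monomial k (t : k.-tuple 'I_M) x := \prod_(i <- t) x i.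

Definition homog_on_sphere k f := exists r : seq (R * k.-tuple 'I_M),
  forall x, on_sphere x -> f x = \sum_(c <- r) c.1 * monomial c.2 x.

Lemma homog_on_sphere_ext k f g :
  homog_on_sphere k f -> (forall x, on_sphere x -> f x = g x) ->
  homog_on_sphere k g.
Proof. by move=> [r fE] fg; exists r => x Sx; rewrite -fg // fE. Qed.

Lemma homog_on_sphere0 k : homog_on_sphere k (fun=> 0).
Proof. by exists [::] => x _; rewrite big_nil. Qed.

Lemma homog_on_sphereD k f g :
  homog_on_sphere k f -> homog_on_sphere k g -> homog_on_sphere k (fun x => f x + g x).
Proof.
by move=> [r fE] [r' gE]; exists (r ++ r') => x Sx; rewrite big_cat fE ?gE.
Qed.

Lemma homog_on_sphereZ k a f :
  homog_on_sphere k f -> homog_on_sphere k (fun x => a * f x).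
Proof.
move=> [r fE]; exists [seq (a * c.1, c.2) | c <- r] => x Sx.
by rewrite big_map fE // mulr_sumr; apply: eq_bigr => c _; rewrite mulrA.
Qed.

Lemma homog_on_sphere_monomial k (t : k.-tuple 'I_M) :
  homog_on_sphere k (monomial t).
Proof. by exists [:: (1, t)] => x _; rewrite big_seq1 mul1r. Qed.

Lemma homog_on_sphere_sum k I (r : seq I) (F : I -> ('I_M -> R) -> R) :
  (forall i, homog_on_sphere k (F i)) ->
  homog_on_sphere k (fun x => \sum_(i <- r) F i x).
Proof.
move=> FH; elim: r => [|i r IHr].
  by apply: homog_on_sphere_ext (homog_on_sphere0 k) _ => x _; rewrite big_nil.
by apply: homog_on_sphere_ext (homog_on_sphereD (FH i) IHr) _ => x _; rewrite big_cons.
Qed.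

Lemma homog_on_sphere_mull k k' g f :
  (forall t : k.-tuple 'I_M, homog_on_sphere k' (fun x => g x * monomial t x)) ->
  homog_on_sphere k f -> homog_on_sphere k' (fun x => g x * f x).
Proof.
move=> gH [r fE].
apply: homog_on_sphere_ext
  (homog_on_sphere_sum r (fun c => homog_on_sphereZ c.1 (gH c.2))) _ => x Sx.
by rewrite fE // mulr_sumr; apply: eq_bigr => c _; rewrite mulrCA.
Qed.

(* Multiplying by |x|^2 = sum_i x_i x_i, which is 1 on the sphere. *)
Lemma homog_on_sphere_addn2 k f :
  homog_on_sphere k f -> homog_on_sphere k.+2 f.
Proof.
move=> fH; apply: homog_on_sphere_ext (homog_on_sphere_mull (g := fun=> 1) _ fH) _.
  move=> t; apply: homog_on_sphere_ext (homog_on_sphere_sum (index_enum 'I_M)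
    (fun i => homog_on_sphere_monomial [tuple of i :: i :: t])) _ => x Sx.
  rewrite -[in RHS]Sx /dot mulr_suml; apply: eq_bigr => i _.
  by rewrite /monomial /= !big_cons mulrA.
by move=> x _; rewrite mul1r.
Qed.

Lemma homog_on_sphere_mul_dot k q f :
  homog_on_sphere k f -> homog_on_sphere k.+1 (fun x => dot x q * f x).
Proof.
apply: homog_on_sphere_mull => t.
apply: homog_on_sphere_ext (homog_on_sphere_sum (index_enum 'I_M)
  (fun i => homog_on_sphereZ (q i) (homog_on_sphere_monomial [tuple of i :: t]))) _.
move=> x _; rewrite /dot mulr_suml; apply: eq_bigr => i _.
by rewrite /monomial /= big_cons; ring.
Qed.

(* Since |x|^2 = 1 on the sphere raises the degree by two, a polynomial of
   degree at most k agrees there with a sum of homogeneous ones of degrees k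
   and k - 1. *)
Definition poly_on_sphere k f := exists g h,
  [/\ homog_on_sphere k g, homog_on_sphere k.-1 h
    & forall x, on_sphere x -> f x = g x + h x].

Lemma poly_on_sphere_ext k f f' :
  poly_on_sphere k f -> (forall x, on_sphere x -> f x = f' x) -> poly_on_sphere k f'.
Proof.
by move=> [g [h [gH hH fE]]] ff'; exists g, h; split=> // x Sx; rewrite -ff' ?fE.
Qed.

Lemma poly_on_sphere1 : poly_on_sphere 0 (fun=> 1).
Proof.
exists (monomial [tuple]), (fun=> 0); split.
- exact: homog_on_sphere_monomial.
- exact: homog_on_sphere0.
- by move=> x _; rewrite /monomial big_nil addr0.
Qed.

Lemma poly_on_sphereZ k a f :
  poly_on_sphere k f -> poly_on_sphere k (fun x => a * f x).
Proof.
move=> [g [h [gH hH fE]]]; exists (fun x => a * g x), (fun x => a * h x).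
split; [exact: homog_on_sphereZ | exact: homog_on_sphereZ |].
by move=> x Sx; rewrite fE // mulrDr.
Qed.

Lemma poly_on_sphere_mul_affine k q a f :
  poly_on_sphere k f -> poly_on_sphere k.+1 (fun x => (dot x q - a) * f x).
Proof.
move=> [g [h [gH hH fE]]]; case: k gH hH => [|k] gH hH /=.
- exists (fun x => dot x q * g x + dot x q * h x), (fun x => - a * g x + - a * h x).
  split.
  + by apply: homog_on_sphereD; apply: homog_on_sphere_mul_dot.
  + by apply: homog_on_sphereD; apply: homog_on_sphereZ.
  + by move=> x Sx; rewrite fE //; ring.
- exists (fun x => dot x q * g x + - a * h x), (fun x => dot x q * h x + - a * g x).
  split.
  + apply: homog_on_sphereD; first exact: homog_on_sphere_mul_dot.
    by apply: homog_on_sphere_addn2; apply: homog_on_sphereZ.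
  + apply: homog_on_sphereD; first exact: homog_on_sphere_mul_dot.
    exact: homog_on_sphereZ.
  + by move=> x Sx; rewrite fE //; ring.
Qed.

Lemma poly_on_sphereS k f : poly_on_sphere k f -> poly_on_sphere k.+1 f.
Proof.
move=> [g [h [gH hH fE]]]; case: k gH hH => [|k] gH hH /=.
- exists (fun=> 0), (fun x => g x + h x); split.
  + exact: homog_on_sphere0.
  + exact: homog_on_sphereD.
  + by move=> x Sx; rewrite fE // add0r.
- exists h, g; split=> //; first exact: homog_on_sphere_addn2.
  by move=> x Sx; rewrite fE // addrC.
Qed.

Lemma poly_on_sphere_leq k k' f :
  (k <= k')%N -> poly_on_sphere k f -> poly_on_sphere k' f.
Proof.
move=> /subnK <-; elim: (k' - k)%N => [//|m IHm] fH.
exact: poly_on_sphereS (IHm fH).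
Qed.

Lemma poly_on_sphere_prod q (B : seq R) :
  poly_on_sphere (size B) (fun x => \prod_(a <- B) (dot x q - a)).
Proof.
elim: B => [|a B IHB] /=.
  by apply: poly_on_sphere_ext poly_on_sphere1 _ => x _; rewrite big_nil.
apply: poly_on_sphere_ext (poly_on_sphere_mul_affine q a IHB) _ => x _.
by rewrite big_cons.
Qed.

Lemma monomial_sort k (t : k.-tuple 'I_M) x :
  monomial (val (sort_ord_tuple t)) x = monomial t x.
Proof. by apply: perm_big; rewrite /= perm_sort. Qed.

Lemma homog_on_sphere_coef k f : homog_on_sphere k f ->
  exists c : sorted_tuple M k -> R,
    forall x, on_sphere x -> f x = \sum_u c u * monomial (val u) x.
Proof.
move=> [r fE]; exists (fun u => \sum_(c <- r | sort_ord_tuple c.2 == u) c.1) => x Sx.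
rewrite fE //; under [RHS]eq_bigr do rewrite mulr_suml.
rewrite (exchange_big_dep xpredT) //=; apply: eq_bigr => c _.
by rewrite (big_pred1 (sort_ord_tuple c.2)) ?monomial_sort // => u; apply: eq_sym.
Qed.

Definition monomial_basis k (u : sorted_tuple M k + sorted_tuple M k.-1) x :=
  match u with inl t | inr t => monomial (val t) x end.

Lemma poly_on_sphere_coef k f : poly_on_sphere k f ->
  exists c : sorted_tuple M k + sorted_tuple M k.-1 -> R,
    forall x, on_sphere x -> f x = \sum_u c u * monomial_basis u x.
Proof.
move=> [g [h [/homog_on_sphere_coef[cg gE] /homog_on_sphere_coef[ch hE] fE]]].
exists (fun u => match u with inl t => cg t | inr t => ch t end) => x Sx.
by rewrite fE // gE // hE // big_sumType.
Qed.

End PolynomialsOnSphere.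

Lemma leq_card_delta_span (F : fieldType) (I : finType) n (b : I -> 'I_n -> F) :
  (forall j, exists c : I -> F, forall k, \sum_u c u * b u k = (j == k)%:R) ->
  (n <= #|I|)%N.
Proof.
move=> /fin_all_exists[c cE].
pose C := \matrix_(j < n, i < #|I|) c j (enum_val i).
pose B := \matrix_(i < #|I|, k < n) b (enum_val i) k.
apply: (@mulmx1_min _ _ _ C B); apply/matrixP => j k; rewrite !mxE -cE.
rewrite [RHS](reindex _ (onW_bij _ (@enum_val_bij I))) /=.
by apply: eq_bigr => i _; rewrite !mxE.
Qed.

Lemma on_sphere_dot_eq1 (R : realDomainType) M (x y : 'I_M -> R) :
  on_sphere x -> on_sphere y -> dot x y = 1 -> x = y.
Proof.
move=> Sx Sy xy1.
have sum_sq0 : \sum_i (x i - y i) ^+ 2 = 0.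
  transitivity (dot x x + dot y y - (dot x y) *+ 2); last by rewrite Sx Sy xy1; ring.
  rewrite /dot -big_split /= -sumrMnl -sumrB; apply: eq_bigr => i _; ring.
apply: boolp.funext => i; apply/eqP; rewrite -subr_eq0 -sqrf_eq0.
by apply/eqP; apply: (psumr_eq0P _ sum_sq0) => // j _; apply: sqr_ge0.
Qed.

Theorem sphere_sdistance_bound (R : realFieldType) N n s
    (p : 'I_n -> 'I_N.+1 -> R) (A : seq R) :
  injective p -> (forall j, on_sphere (p j)) ->
  (forall j k, j != k -> dot (p j) (p k) \in A) -> (size A <= s.+1)%N ->
  (n <= 'C(s.+1 + N, s.+1) + 'C(s + N, s))%N.
Proof.
move=> p_inj Sp pA sizeA; rewrite -!card_sorted_tuple -card_sum.
apply: (@leq_card_delta_span _ _ _ (fun u k => monomial_basis u (p k))) => j.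
pose A' := [seq a <- A | a != 1].
pose e := \prod_(a <- A') (1 - a).
have e_neq0 : e != 0.
  rewrite prodf_seq_neq0; apply/allP => a.
  by rewrite mem_filter subr_eq0 eq_sym => /andP[].
have fH : poly_on_sphere s.+1 (fun x => e^-1 * \prod_(a <- A') (dot x (p j) - a)).
  apply/poly_on_sphereZ/(poly_on_sphere_leq _ (poly_on_sphere_prod _ _)).
  by rewrite size_filter (leq_trans (count_size _ _)).
have [c fE] := poly_on_sphere_coef fH; exists c => k; rewrite -fE //.
have [<-|jk] := eqVneq j k; first by rewrite (Sp j) mulVf.
have pkj_neq1 : dot (p k) (p j) != 1.
  by apply: contra_neq jk => /(on_sphere_dot_eq1 (Sp k) (Sp j)) /p_inj ->.
apply/eqP; rewrite mulf_eq0 prodf_seq_eq0; apply/orP; right.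
apply/hasP; exists (dot (p k) (p j)); last by rewrite /= subrr.
by rewrite mem_filter pkj_neq1 pA // eq_sym.
Qed.

Section Realification.
Variables (R : realType) (d : nat).
Implicit Types z w : 'I_d -> R[i].

Definition realify z : 'I_(d + d) -> R :=
  fun i => match split i with
            | inl j => complex.Re (z j)
            | inr j => complex.Im (z j)
            end.

Lemma realify_lshift z j : realify z (lshift d j) = complex.Re (z j).
Proof. by rewrite /realify (unsplitK (inl _ j)). Qed.

Lemma realify_rshift z j : realify z (rshift d j) = complex.Im (z j).
Proof. by rewrite /realify (unsplitK (inr _ j)). Qed.

Lemma realify_inj : injective realify.
Proof.
move=> z w zw; apply: boolp.funext => j.
have := congr1 (fun x => x (lshift d j)) zw.
have := congr1 (fun x => x (rshift d j)) zw.
rewrite /= !realify_lshift !realify_rshift.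
by case: (z j) (w j) => [a b] [a' b'] /= -> ->.
Qed.

Lemma dot_realify z w : dot (realify z) (realify w) = complex.Re (cinner z w).
Proof.
rewrite /dot big_split_ord /= /cinner (@raddf_sum _ _ (@complex.Re R : Rcomplex R -> R)).
rewrite -big_split /=; apply: eq_bigr => j _.
rewrite !realify_lshift !realify_rshift.
by case: (z j) (w j) => [a b] [a' b'] /=; ring.
Qed.

End Realification.

Lemma bin_addl m n : 'C(m + n, n) = 'C(m + n, m).
Proof. by rewrite -(bin_sub (leq_addl m n)) addnK. Qed.

Lemma no_unit_vec_dim0 (R : realType) (v : 'I_0 -> R[i]) : ~ unit_vec v.
Proof. by rewrite /unit_vec /cinner big_ord0 => /eqP; rewrite eq_sym oner_eq0. Qed.

Lemma leq1_no_angles (R : realType) d n (X : 'I_n -> 'I_d -> R[i]) :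
  injective X -> angles_real_parts_at_most 0 X -> (n <= 1)%N.
Proof.
move=> Xinj [A [sizeA XA]]; rewrite leqNgt; apply/negP => n_gt1.
have X01 : X (Ordinal (ltnW n_gt1)) <> X (Ordinal n_gt1) by move/Xinj.
by have := XA _ _ X01; case: A sizeA {XA}.
Qed.

Theorem theorem10p5 (R : realType) (d n s : nat)
  (X : 'I_n -> ('I_d -> R[i]))
  (Xinj : injective X)
  (Xunit : forall j, unit_vec (X j))
  (Xang : angles_real_parts_at_most s X) :
  (n <= 'C(s + 2 * d - 1, 2 * d - 1) + 'C(s + 2 * d - 2, 2 * d - 1))%N.
Proof.
case: d X Xinj Xunit Xang => [|d] X Xinj Xunit Xang.
  by case: n X Xunit {Xinj Xang} => // n X /(_ ord0) /no_unit_vec_dim0.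
have -> : (2 * d.+1 = (d + d.+1).+1)%N by rewrite mul2n -addnn.
rewrite addnS !subSS !subn0.
case: s Xang => [|s] Xang.
  rewrite add0n binn bin_small ?addn0 ?subn1 ?ltn_predL ?addnS //.
  exact: leq1_no_angles Xinj Xang.
rewrite subn1 addSn /= -addSn !bin_addl.
have [A [sizeA XA]] := Xang.
apply: (@sphere_sdistance_bound _ _ _ _ (fun j => realify (X j)) A) sizeA.
- by move=> j k jk; apply/Xinj/realify_inj.
- by move=> j; rewrite /on_sphere (dot_realify (X j)) Xunit.
- move=> j k jk; rewrite (dot_realify (X j)) XA // => /Xinj /eqP.
  by rewrite (negbTE jk).
Qed.
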